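(* Let $(R,\mathfrak{m})$ be a local ring with residue field $k$, let $S=\mathrm{Spec}\,R$, let $A$ be a finite abelian group and let $H\hookrightarrow D_S(A)$ be a closed subgroup scheme, with $R[H]=R[A]/I$ for a Hopf ideal $I$. If the order of $A$ is invertible in $R$, then the quotient map $R[H]\to R[H]\otimes_R k$ induces a bijection on group-like elements.
   Context: $D_S(A)=\mathrm{Spec}\,R[A]$. An element $g$ of a Hopf algebra is group-like if $\Delta(g)=g\otimes g$ and $\varepsilon(g)=1$. $H$ need not be flat over $R$. *)

From HB Require Import structures.
From mathcomp Require Import all_boot all_order all_algebra.
Set Implicit Arguments. Unset Strict Implicit. Unset Printing Implicit Defensive.
Import Order.TTheory GRing.Theory Num.Theory.
Local Open Scope ring_scope.

(* The group algebra T[A] of a finite abelian group A (written additively,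
   A : finZmodType) over a commutative ring T is modelled as the free
   T-module {ffun A -> T} (f = \sum_a f a . e_a), with convolution product.
   T[A] (x)_T T[A] = T[A x A] is modelled by functions A -> A -> T.          *)

Section GroupAlgebra.
Variables (T : comRingType) (A : finZmodType).

Definition conv (f g : {ffun A -> T}) : {ffun A -> T} :=
  [ffun c => \sum_(a : A) f a * g (c - a)].

(* comultiplication Delta(e_a) = e_a (x) e_a, extended linearly *)
Definition comult (f : {ffun A -> T}) : A -> A -> T :=
  fun a b => if a == b then f a else 0.

Definition counit (f : {ffun A -> T}) : T := \sum_(a : A) f a.

Definition antipode (f : {ffun A -> T}) : {ffun A -> T} := [ffun a => f (- a)].

Definition tens (f g : {ffun A -> T}) : A -> A -> T := fun a b => f a * g b.

Definition is_ideal (I : {ffun A -> T} -> Prop) : Prop :=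
  [/\ I 0,
      (forall f g, I f -> I g -> I (f - g)) &
      (forall f g, I f -> I (conv g f))].

(* The kernel of T[A] (x) T[A] -> (T[A]/I) (x) (T[A]/I), namely
   I (x) T[A] + T[A] (x) I  (inside T[A x A]; since T[A] is free,
   I (x) T[A] is the set of h all of whose "columns" h(-,b) lie in I). *)
Definition in_tensor_ideal (I : {ffun A -> T} -> Prop) (h : A -> A -> T) : Prop :=
  exists h1 h2 : A -> A -> T,
    [/\ (forall a b, h a b = h1 a b + h2 a b),
        (forall b, I [ffun a => h1 a b]) &
        (forall a, I [ffun b => h2 a b])].

Definition hopf_ideal (I : {ffun A -> T} -> Prop) : Prop :=
  [/\ is_ideal I,
      (forall f, I f -> in_tensor_ideal I (comult f)),
      (forall f, I f -> counit f = 0) &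
      (forall f, I f -> I (antipode f))].

(* f (a representative of its class in T[A]/I) is group-like in the Hopf
   algebra T[A]/I : Delta(f) = f (x) f in (T[A]/I)(x)(T[A]/I), eps(f) = 1. *)
Definition grouplike (I : {ffun A -> T} -> Prop) (f : {ffun A -> T}) : Prop :=
  counit f = 1 /\ in_tensor_ideal I (fun a b => comult f a b - tens f f a b).

End GroupAlgebra.

Definition local_ring (R : comUnitRingType) : Prop :=
  forall x y : R, x \notin GRing.unit -> y \notin GRing.unit ->
                  x + y \notin GRing.unit.

Definition red (R : comUnitRingType) (k : fieldType) (pi : {rmorphism R -> k})
  (A : finZmodType) (f : {ffun A -> R}) : {ffun A -> k} := [ffun a => pi (f a)].

(* the ideal I (x)_R k of k[A] = R[A] (x)_R k, i.e. the image of I *)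
Definition red_ideal (R : comUnitRingType) (k : fieldType) (pi : {rmorphism R -> k})
  (A : finZmodType) (I : {ffun A -> R} -> Prop) : {ffun A -> k} -> Prop :=
  fun u => exists f, I f /\ u = red pi f.

From HB Require Import structures.
From mathcomp Require Import all_boot all_order all_algebra.
From mathcomp Require Import fingroup cyclic.
From Stdlib Require Import Classical.
From mathcomp Require Import zify.
Set Implicit Arguments. Unset Strict Implicit. Unset Printing Implicit Defensive.
Import Order.TTheory GRing.Theory Num.Theory.
Local Open Scope ring_scope.

(* Let n = #|A|.  Group-like elements of R[A]/I are n-th roots of unity:
   pushing Delta g = g (x) g along e_a (x) e_b |-> e_(j a + b) gives
   g^(j+1) = [(j+1) .]_* g modulo I, and [n .]_* g = eps(g) = 1.
   Injectivity: if f = g modulo m, then q = f g^(n-1) is an n-th root of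
   unity with q = 1 + x modulo I, x in m[A]; then (1 + x)^n - 1 = x U where U
   reduces to the unit n, so U is a unit of R[A] (its multiplication matrix
   has a unit determinant) and x lies in I.
   Surjectivity: over k, the linear forms vanishing on the image J of I form
   a subalgebra of k^A containing 1 (J is a coideal), on which evaluation at
   a group-like u is a character.  Such a character is the evaluation at
   some c in A, so every form vanishing on J vanishes on u - e_c, which
   therefore lies in J. *)

Lemma mulrn_card (A : finZmodType) (a : A) : a *+ #|A| = 0.
Proof. by rewrite -FinRing.zmodXgE -cardsT expg_cardG ?inE. Qed.

Lemma addr_eq_subr (V : zmodType) (x y z : V) : (x + y == z) = (y == z - x).
Proof. by rewrite [RHS]eq_sym subr_eq addrC eq_sym. Qed.

Lemma sum_pred1_mul (R : pzSemiRingType) (I : finType) (P : pred I) y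
    (F : I -> R) :
  P =1 pred1 y -> \sum_x (P x)%:R * F x = F y.
Proof.
move=> Py; under eq_bigr do rewrite mulr_natl mulrb.
by rewrite -big_mkcond (big_pred1 y).
Qed.

Lemma subspace_vspace (K : fieldType) (vT : vectType K) (J : vT -> Prop) :
  J 0 -> (forall u v, J u -> J v -> J (u + v)) ->
  (forall t v, J v -> J (t *: v)) ->
  exists U : {vspace vT}, forall v, v \in U <-> J v.
Proof.
move=> J0 JD JZ.
suff: forall d (U : {vspace vT}), (\dim {:vT} - \dim U <= d)%N ->
    (forall v, v \in U -> J v) ->
  exists U' : {vspace vT}, forall v, v \in U' <-> J v.
  move=> /(_ (\dim {:vT}) 0%VS); apply=> [|v]; first exact: leq_subr.
  by rewrite memv0 => /eqP ->.
elim=> [|d IHd] U dimU UJ.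
  exists U => v; split; first exact: UJ.
  move=> _; have /eqP -> : U == fullv by rewrite eqEdim subvf -subn_eq0 -leqn0.
  exact: memvf.
have [JU | /not_all_ex_not [w nJU]] := classic (forall v, J v -> v \in U).
  by exists U => v; split; [exact: UJ | exact: JU].
have [Jw wU] := conj (not_imply_elim _ _ nJU) (not_imply_elim2 _ _ nJU).
apply: (IHd (U + <[w]>)%VS).
  have : (\dim U < \dim (U + <[w]>))%N.
    rewrite (ltn_leqif (dimv_leqif_sup (addvSl U <[w]>))) subv_add subvv /=.
    by rewrite -memvE; apply/negP.
  have := dimvS (subvf (U + <[w]>)%VS); lia.
move=> v /memv_addP [u Uu [y /vlineP [t ->] ->]].
by apply: JD; [exact: UJ | exact: JZ].
Qed.

Section GroupAlgebra.
Variables (T : comNzRingType) (A : finZmodType).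

(* [{ffun A -> T}] already carries the pointwise product; [galg] is the same
   module with the convolution product, i.e. the group ring T[A]. *)
Definition galg := {ffun A -> T}.

Definition gelt (a : A) : galg := [ffun x => (x == a)%:R].

Lemma convC : commutative (@conv T A).
Proof.
move=> f g; apply/ffunP=> c; rewrite !ffunE (reindex_inj (subrI c)) /=.
by apply: eq_bigr => b _; rewrite subKr mulrC.
Qed.

Lemma conv1 : left_id (gelt 0) (@conv T A).
Proof.
move=> f; apply/ffunP=> c; rewrite ffunE; under eq_bigr do rewrite ffunE.
by rewrite (sum_pred1_mul _ (y := 0)) // subr0.
Qed.

Lemma convDl : left_distributive (@conv T A) +%R.
Proof.
move=> f g h; apply/ffunP=> c; rewrite !ffunE -big_split /=.
by apply: eq_bigr => a _; rewrite ffunE mulrDl.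
Qed.

Lemma convA : associative (@conv T A).
Proof.
move=> f g h; apply/ffunP=> c; rewrite !ffunE.
under [LHS]eq_bigr do rewrite ffunE big_distrr /=.
under [RHS]eq_bigr do rewrite ffunE big_distrl /=.
rewrite [RHS]exchange_big /=; apply: eq_bigr => b _.
rewrite [RHS](reindex_inj (addrI b)) /=; apply: eq_bigr => a _.
by rewrite [b + a]addrC addrK opprD addrA mulrA addrAC.
Qed.

HB.instance Definition _ := GRing.Zmodule.on galg.
HB.instance Definition _ :=
  GRing.Zmodule_isComPzRing.Build galg convA convC conv1 convDl.

Lemma galg1 : (1 : galg) = gelt 0. Proof. by []. Qed.

Lemma galg_mulE (f g : galg) c : (f * g) c = \sum_a f a * g (c - a).
Proof. by rewrite ffunE. Qed.

Lemma mul_geltE x (f : galg) c : (gelt x * f) c = f (c - x).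
Proof.
rewrite galg_mulE; under eq_bigr do rewrite ffunE.
by rewrite (sum_pred1_mul _ (y := x)).
Qed.

Lemma galg_natE m c : (m%:R : galg) c = (c == 0)%:R *+ m.
Proof. by rewrite ffunMnE galg1 ffunE. Qed.

Lemma counit_gelt a : counit (gelt a) = 1.
Proof.
rewrite /counit; under eq_bigr do rewrite ffunE -[_%:R]mulr1.
exact: sum_pred1_mul.
Qed.

Definition push (phi : A -> A) (f : {ffun A -> T}) : galg :=
  [ffun c => \sum_a (phi a == c)%:R * f a].

(* The image of [h] under [e_a (x) e_b |-> e_(phi a) * e_b], i.e. the
   multiplication of T[A] precomposed with [push phi (x) id]. *)
Definition mpush (phi : A -> A) (h : A -> A -> T) : galg :=
  [ffun c => \sum_a \sum_b (phi a + b == c)%:R * h a b].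

Lemma push_ext phi psi f : phi =1 psi -> push phi f = push psi f.
Proof.
by move=> e; apply/ffunP => c; rewrite !ffunE; apply: eq_bigr => a _; rewrite e.
Qed.

Lemma push0E f c : push (fun _ => 0) f c = (c == 0)%:R * counit f.
Proof. by rewrite ffunE big_distrr; apply: eq_bigr => a _; rewrite eq_sym. Qed.

Lemma push0_counit1 f : counit f = 1 -> push (fun _ => 0) f = 1.
Proof. by move=> e; apply/ffunP => c; rewrite push0E e mulr1 galg1 ffunE. Qed.

Lemma push0_counit0 f : counit f = 0 -> push (fun _ => 0) f = 0.
Proof. by move=> e; apply/ffunP => c; rewrite push0E e mulr0 ffunE. Qed.

Lemma mpush_ext phi h h' : h =2 h' -> mpush phi h = mpush phi h'.
Proof.
move=> e; apply/ffunP => c; rewrite !ffunE.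
by apply: eq_bigr => a _; apply: eq_bigr => b _; rewrite e.
Qed.

Lemma mpushD phi h h' :
  mpush phi (fun a b => h a b + h' a b) = mpush phi h + mpush phi h'.
Proof.
apply/ffunP => c; rewrite !ffunE -big_split /=.
by apply: eq_bigr => a _; rewrite -big_split; apply: eq_bigr => b _; rewrite mulrDr.
Qed.

Lemma mpushB phi h h' :
  mpush phi (fun a b => h a b - h' a b) = mpush phi h - mpush phi h'.
Proof.
apply/ffunP => c; rewrite !ffunE -sumrB /=.
by apply: eq_bigr => a _; rewrite -sumrB; apply: eq_bigr => b _; rewrite mulrBr.
Qed.

Lemma mpush_cols phi h :
  mpush phi h = \sum_b gelt b * push phi [ffun a => h a b].
Proof.
apply/ffunP => c; rewrite sum_ffunE ffunE exchange_big /=.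
apply: eq_bigr => b _; rewrite mul_geltE ffunE; apply: eq_bigr => a _.
by rewrite ffunE addrC addr_eq_subr.
Qed.

Lemma mpush_rows phi h :
  mpush phi h = \sum_a gelt (phi a) * [ffun b => h a b].
Proof.
apply/ffunP => c; rewrite sum_ffunE ffunE; apply: eq_bigr => a _.
rewrite mul_geltE ffunE (sum_pred1_mul _ (y := c - phi a)) // => b.
by rewrite addr_eq_subr.
Qed.

Lemma mpush_comult phi f : mpush phi (comult f) = push (fun a => phi a + a) f.
Proof.
apply/ffunP => c; rewrite !ffunE; apply: eq_bigr => a _.
rewrite (bigD1 a) //= /comult eqxx big1 ?addr0 // => b nb.
by rewrite [a == b]eq_sym (negPf nb) mulr0.
Qed.

Lemma mpush_tens phi f g : mpush phi (tens f g) = push phi f * g.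
Proof.
apply/ffunP => c; rewrite galg_mulE ffunE.
under [RHS]eq_bigr do rewrite ffunE big_distrl /=.
rewrite [RHS]exchange_big /=; apply: eq_bigr => a _.
under [RHS]eq_bigr do rewrite -mulrA.
rewrite [RHS](sum_pred1_mul _ (y := phi a)) => [|x]; last exact: eq_sym.
by rewrite (sum_pred1_mul _ (y := c - phi a)) // => b; rewrite addr_eq_subr.
Qed.

Section Ideal.
Variable I : {ffun A -> T} -> Prop.
Hypothesis idealI : is_ideal I.

Lemma ideal0 : I 0. Proof. by case: idealI. Qed.

Lemma idealB (f g : galg) : I f -> I g -> I (f - g).
Proof. by case: idealI => _ + _; apply. Qed.

Lemma idealN (f : galg) : I f -> I (- f).
Proof. by move=> If; rewrite -sub0r; apply: idealB => //; apply: ideal0. Qed.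

Lemma idealD (f g : galg) : I f -> I g -> I (f + g).
Proof. by move=> If Ig; rewrite -[g]opprK; apply: idealB => //; apply: idealN. Qed.

Lemma idealMl (g f : galg) : I f -> I (g * f).
Proof. by case: idealI => _ _; apply. Qed.

Lemma idealMr (f g : galg) : I f -> I (f * g).
Proof. by rewrite mulrC; apply: idealMl. Qed.

Lemma ideal_sum (X : Type) (r : seq X) (P : pred X) (F : X -> galg) :
  (forall i, P i -> I (F i)) -> I (\sum_(i <- r | P i) F i).
Proof. by move=> IF; apply: (big_ind I) => //; [apply: ideal0 | apply: idealD]. Qed.

Lemma idealXB (x y : galg) n : I (x - y) -> I (x ^+ n - y ^+ n).
Proof. by rewrite subrXX; apply: idealMr. Qed.

Lemma mpush_tensor_ideal phi h : (forall f, I f -> I (push phi f)) ->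
  in_tensor_ideal I h -> I (mpush phi h).
Proof.
move=> Iphi [h1 [h2 [e I1 I2]]]; rewrite (mpush_ext phi e) mpushD.
apply: idealD.
  by rewrite mpush_cols; apply: ideal_sum => b _; apply/idealMl/Iphi.
by rewrite mpush_rows; apply: ideal_sum => a _; apply: idealMl.
Qed.

End Ideal.

Section HopfIdeal.
Variable I : {ffun A -> T} -> Prop.
Hypothesis hopfI : hopf_ideal I.
Let idealI : is_ideal I. Proof. by case: hopfI. Qed.

Lemma push_mulrn_ideal j f : I f -> I (push (fun a => a *+ j) f).
Proof.
elim: j f => [|j IHj] f If.
  rewrite (push_ext _ (psi := fun _ => 0)) => [|a]; last by rewrite mulr0n.
  rewrite push0_counit0; first exact: ideal0.
  by case: hopfI => _ _ + _; apply.
rewrite (push_ext _ (psi := fun a => a *+ j + a)) => [|a]; last by rewrite mulrSr.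
rewrite -mpush_comult; apply: mpush_tensor_ideal => //.
by case: hopfI => _ + _ _; apply.
Qed.

Lemma grouplike_push_mulrn (g : galg) j :
  grouplike I g -> I (push (fun a => a *+ j) g - g ^+ j).
Proof.
move=> [counit_g comult_g]; elim: j => [|j IHj].
  rewrite (push_ext _ (psi := fun _ => 0)) => [|a]; last by rewrite mulr0n.
  by rewrite push0_counit1 // expr0 subrr; apply: ideal0.
have -> : push (fun a => a *+ j.+1) g - g ^+ j.+1 =
    (mpush (fun a => a *+ j) (fun a b => comult g a b - tens g g a b))
    + (push (fun a => a *+ j) g - g ^+ j) * g.
  rewrite mpushB mpush_comult mpush_tens exprSr mulrBl addrA subrK.
  by congr (_ - _); apply: push_ext => a; rewrite mulrSr.
apply: (idealD idealI); last exact: idealMr.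
apply: (mpush_tensor_ideal idealI _ comult_g) => f; exact: push_mulrn_ideal.
Qed.

Lemma grouplike_expr_card (g : galg) : grouplike I g -> I (g ^+ #|A| - 1).
Proof.
move=> gl_g; have := grouplike_push_mulrn #|A| gl_g.
rewrite (push_ext _ (psi := fun _ => 0)) => [|a]; last exact: mulrn_card.
rewrite push0_counit1; last by case: gl_g.
by rewrite -opprB => /(idealN idealI); rewrite opprK.
Qed.

End HopfIdeal.

Lemma grouplike_gelt I c : is_ideal I -> grouplike I (gelt c).
Proof.
move=> idealI; split; first exact: counit_gelt.
exists (fun _ _ => 0), (fun _ _ => 0); split.
- move=> a b; rewrite addr0 /comult /tens !ffunE.
  have [<-|ab] := eqVneq a b; first by rewrite -natrM mulnb andbb subrr.
  rewrite sub0r; case: (eqVneq a c) => [ac|_]; last by rewrite mul0r oppr0.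
  by rewrite -ac eq_sym (negPf ab) mulr0 oppr0.
- by move=> b; apply: ideal0.
- by move=> a; apply: ideal0.
Qed.

End GroupAlgebra.

Section Pairing.
Variables (T : comNzRingType) (A : finZmodType).

(* [psi : A -> T] stands for the linear form [e_a |-> psi a] on T[A], and
   [dot2 psi phi] for [psi (x) phi] on T[A] (x) T[A]. *)
Definition dot (psi : A -> T) (f : {ffun A -> T}) := \sum_a psi a * f a.
Definition dot2 (psi phi : A -> T) (h : A -> A -> T) :=
  \sum_a \sum_b psi a * phi b * h a b.

Definition perp (J : {ffun A -> T} -> Prop) (psi : A -> T) :=
  forall f, J f -> dot psi f = 0.

Lemma dotB psi f g : dot psi (f - g) = dot psi f - dot psi g.
Proof. by rewrite /dot -sumrB; apply: eq_bigr => a _; rewrite !ffunE mulrBr. Qed.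

Lemma dot_gelt psi c : dot psi (gelt T c) = psi c.
Proof.
by rewrite /dot; under eq_bigr do rewrite ffunE mulrC; exact: sum_pred1_mul.
Qed.

Lemma dot_cst t f : dot (fun=> t) f = t * counit f.
Proof. by rewrite /dot /counit big_distrr. Qed.

Lemma dot_affine s t psi f :
  dot (fun a => s * psi a + t) f = s * dot psi f + t * counit f.
Proof.
rewrite /dot /counit !big_distrr -big_split /=; apply: eq_bigr => a _.
by rewrite mulrDl mulrA.
Qed.

Lemma dot2D psi phi h h' : dot2 psi phi (fun a b => h a b + h' a b) =
  dot2 psi phi h + dot2 psi phi h'.
Proof.
rewrite /dot2 -big_split; apply: eq_bigr => a _.
by rewrite -big_split; apply: eq_bigr => b _; rewrite mulrDr.
Qed.

Lemma dot2B psi phi h h' : dot2 psi phi (fun a b => h a b - h' a b) =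
  dot2 psi phi h - dot2 psi phi h'.
Proof.
rewrite /dot2 -sumrB; apply: eq_bigr => a _.
by rewrite -sumrB; apply: eq_bigr => b _; rewrite mulrBr.
Qed.

Lemma dot2_comult psi phi f :
  dot2 psi phi (comult f) = dot (fun a => psi a * phi a) f.
Proof.
apply: eq_bigr => a _; rewrite (bigD1 a) //= /comult eqxx big1 ?addr0 // => b.
by rewrite eq_sym => /negPf ->; rewrite mulr0.
Qed.

Lemma dot2_tens psi phi f g : dot2 psi phi (tens f g) = dot psi f * dot phi g.
Proof.
rewrite /dot big_distrl; apply: eq_bigr => a _; rewrite big_distrr.
by apply: eq_bigr => b _; rewrite /tens mulrACA.
Qed.

Lemma dot2_tensor_ideal J psi phi h : perp J psi -> perp J phi ->
  in_tensor_ideal J h -> dot2 psi phi h = 0.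
Proof.
move=> psiJ phiJ [h1 [h2 [e J1 J2]]].
have -> : dot2 psi phi h = dot2 psi phi h1 + dot2 psi phi h2.
  by rewrite -dot2D; apply: eq_bigr => a _; apply: eq_bigr => b _; rewrite e.
have -> : dot2 psi phi h1 = 0.
  rewrite /dot2 exchange_big big1 //= => b _.
  transitivity (phi b * dot psi [ffun a => h1 a b]); last by rewrite psiJ ?mulr0.
  by rewrite /dot big_distrr /=; apply: eq_bigr => a _; rewrite ffunE mulrAC mulrC.
rewrite add0r /dot2 big1 // => a _.
transitivity (psi a * dot phi [ffun b => h2 a b]); last by rewrite phiJ ?mulr0.
by rewrite /dot big_distrr /=; apply: eq_bigr => b _; rewrite ffunE mulrA.
Qed.

End Pairing.

Section FieldDuality.
Variables (F : fieldType) (A : finZmodType).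

Definition subspace (J : {ffun A -> F} -> Prop) :=
  [/\ J 0, (forall f g, J f -> J g -> J (f + g))
         & (forall t (f : {ffun A -> F^o}), J f -> J (t *: f))].

Lemma dot_lfun (L : 'End({ffun A -> F^o})) a w :
  L w a = dot (fun b => L (gelt F b) a) w.
Proof.
have scaleE (x : F) (y : F^o) : x *: y = x * y by [].
have wE : w = \sum_b w b *: (gelt F b : {ffun A -> F^o}).
  apply/ffunP => c; rewrite sum_ffunE (bigD1 c) //= !ffunE scaleE eqxx mulr1.
  by rewrite big1 ?addr0 // => b /negPf nb; rewrite !ffunE scaleE eq_sym nb mulr0.
rewrite {1}wE linear_sum sum_ffunE /dot; apply: eq_bigr => b _.
by rewrite linearZ /= ffunE scaleE mulrC.
Qed.

Lemma vspace_separation (U : {vspace {ffun A -> F^o}}) v : v \notin U ->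
  exists psi, perp (fun w => w \in U) psi /\ dot psi v != 0.
Proof.
move=> vU; pose L := (\1 - projv U)%VF.
have LE w : L w = w - projv U w by rewrite !lfunE /= !lfunE.
have [a Lva] : exists a, L v a != 0.
  apply/existsP; apply: contraT; rewrite negb_exists => /forallP L0.
  suff : L v == 0 by rewrite LE subr_eq0 => /eqP vE; rewrite vE memv_proj in vU.
  by apply/eqP/ffunP => a; rewrite ffunE; apply/eqP/negPn/L0.
exists (fun b => L (gelt F b) a); split; last by rewrite -dot_lfun.
by move=> w wU; rewrite -dot_lfun LE projv_id // subrr ffunE.
Qed.

Lemma subspaceN J f : subspace J -> J f -> J (- f).
Proof. by case=> _ _ JZ /(JZ (-1)); rewrite scaleN1r. Qed.

Lemma subspace_perpK J : subspace J ->
  forall v, (forall psi, perp J psi -> dot psi v = 0) -> J v.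
Proof.
case=> J0 JD JZ v perpv.
have [U UJ] := subspace_vspace (vT := {ffun A -> F^o}) J0 JD JZ.
apply/UJ; apply: contraT => vU.
have [psi [psiU /eqP[]]] := vspace_separation vU.
by apply: perpv => f /UJ; apply: psiU.
Qed.

End FieldDuality.

Section GrouplikeModSubspace.
Variables (F : fieldType) (A : finZmodType) (J : {ffun A -> F} -> Prop).
Hypothesis subJ : subspace J.
Hypothesis counitJ : forall f, J f -> counit f = 0.
Hypothesis comultJ : forall f, J f -> in_tensor_ideal J (comult f).

Lemma perp_cst t : perp J (fun=> t).
Proof. by move=> f Jf; rewrite dot_cst counitJ ?mulr0. Qed.

Lemma perp_affine s t psi : perp J psi -> perp J (fun a => s * psi a + t).
Proof. by move=> psiJ f Jf; rewrite dot_affine psiJ // counitJ // !mulr0 addr0. Qed.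

Lemma perp_mul psi phi :
  perp J psi -> perp J phi -> perp J (fun a => psi a * phi a).
Proof.
move=> psiJ phiJ f Jf; rewrite -dot2_comult.
exact: dot2_tensor_ideal psiJ phiJ (comultJ Jf).
Qed.

Variable u : {ffun A -> F}.
Hypothesis gl_u : grouplike J u.

Lemma grouplike_dotM psi phi : perp J psi -> perp J phi ->
  dot (fun a => psi a * phi a) u = dot psi u * dot phi u.
Proof.
move=> psiJ phiJ; apply/eqP; rewrite -subr_eq0 -dot2_comult -dot2_tens -dot2B.
by rewrite (dot2_tensor_ideal psiJ phiJ gl_u.2).
Qed.

(* Otherwise, multiplying for every x a form [chi] with [chi x = 0] and
   [dot chi u = 1] yields a form that vanishes everywhere but not at u. *)
Lemma grouplike_dot_eval : exists c, forall psi, perp J psi -> dot psi u = psi c.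
Proof.
apply: NNPP => no_eval.
have sep x : exists2 phi, perp J phi & dot phi u != phi x.
  apply: NNPP => no_phi; apply: no_eval; exists x => phi phiJ.
  by apply/eqP; apply: contraT => ne; exfalso; apply: no_phi; exists phi.
have vanish (r : seq A) : exists psi,
    [/\ perp J psi, dot psi u = 1 & forall c, c \in r -> psi c = 0].
  elim: r => [|x r [psi [psiJ psiu psi0]]].
    exists (fun=> 1); split=> //; first exact: perp_cst.
    by rewrite dot_cst mul1r; case: gl_u.
  have [phi phiJ phiu] := sep x.
  have D_neq0 : phi x - dot phi u != 0 by rewrite subr_eq0 eq_sym.
  pose chi a := - (phi x - dot phi u)^-1 * phi a + (phi x - dot phi u)^-1 * phi x.
  have chiJ : perp J chi by apply: perp_affine.
  exists (fun a => chi a * psi a); split.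
  - exact: perp_mul.
  - rewrite grouplike_dotM // psiu mulr1.
    by rewrite dot_affine gl_u.1 mulr1 mulNr addrC -mulrBr mulVf.
  - move=> c; rewrite in_cons => /orP[/eqP -> | /psi0 ->]; last by rewrite mulr0.
    by rewrite /chi mulNr addNr mul0r.
have [psi [_ psiu psi0]] := vanish (enum A).
have : dot psi u = 0 by rewrite /dot big1 // => a _; rewrite psi0 ?mul0r ?mem_enum.
by rewrite psiu => /eqP; rewrite oner_eq0.
Qed.

Lemma grouplike_mod_subspace : exists c, J (u - gelt F c).
Proof.
have [c u_eval] := grouplike_dot_eval; exists c.
apply: (subspace_perpK subJ) => psi psiJ.
by rewrite dotB u_eval // dot_gelt subrr.
Qed.

End GrouplikeModSubspace.

Section Reduction.
Variables (R : comUnitRingType) (k : fieldType) (pi : {rmorphism R -> k}).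
Variable A : finZmodType.

Local Notation red_galg := (@red R k pi A : galg R A -> galg k A).

Lemma red_is_zmod_morphism : zmod_morphism red_galg.
Proof. by move=> f g; apply/ffunP => a; rewrite !ffunE rmorphB. Qed.

Lemma red_is_monoid_morphism : monoid_morphism red_galg.
Proof.
split; first by apply/ffunP => a; rewrite !ffunE rmorph_nat.
move=> f g; apply/ffunP => c; rewrite ffunE !galg_mulE rmorph_sum.
by apply: eq_bigr => a _; rewrite rmorphM !ffunE.
Qed.

HB.instance Definition _ := GRing.isZmodMorphism.Build (galg R A) (galg k A)
  red_galg red_is_zmod_morphism.
HB.instance Definition _ := GRing.isMonoidMorphism.Build (galg R A) (galg k A)
  red_galg red_is_monoid_morphism.

Lemma red_gelt (c : A) : red pi (gelt R c) = gelt k c.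
Proof. by apply/ffunP => a; rewrite !ffunE rmorph_nat. Qed.

Lemma counit_red (f : {ffun A -> R}) : counit (red pi f) = pi (counit f).
Proof. by rewrite /counit rmorph_sum; apply: eq_bigr => a _; rewrite ffunE. Qed.

Lemma red_tensor_ideal (I : {ffun A -> R} -> Prop) (h : A -> A -> R) :
  in_tensor_ideal I h -> in_tensor_ideal (red_ideal pi I) (fun a b => pi (h a b)).
Proof.
move=> [h1 [h2 [e I1 I2]]].
exists (fun a b => pi (h1 a b)), (fun a b => pi (h2 a b)); split.
- by move=> a b; rewrite e rmorphD.
- move=> b; exists [ffun a => h1 a b]; split => //.
  by apply/ffunP => a; rewrite !ffunE.
- move=> a; exists [ffun b => h2 a b]; split => //.
  by apply/ffunP => b; rewrite !ffunE.
Qed.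

Lemma grouplike_red (I : {ffun A -> R} -> Prop) (f : {ffun A -> R}) :
  grouplike I f -> grouplike (red_ideal pi I) (red pi f).
Proof.
move=> [counit_f comult_f]; split; first by rewrite counit_red counit_f rmorph1.
have [h1 [h2 [e I1 I2]]] := red_tensor_ideal comult_f.
exists h1, h2; split => // a b; rewrite -e rmorphB /comult /tens rmorphM !ffunE.
by case: (a == b); rewrite ?rmorph0.
Qed.

Lemma red_ideal_subspace (I : {ffun A -> R} -> Prop) : is_ideal I ->
  (forall y : k, exists x, pi x = y) -> subspace (red_ideal pi I).
Proof.
move=> idealI pi_surj; split.
- by exists 0; split; [exact: ideal0 | rewrite rmorph0].
- move=> _ _ [f [If ->]] [g [Ig ->]]; exists (f + g).
  by split; [exact: idealD | rewrite rmorphD].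
move=> t _ [f [If ->]]; have [r <-] := pi_surj t.
exists (([ffun a => (a == 0)%:R * r] : galg R A) * f); split; first exact: idealMl.
apply/ffunP => b; rewrite !ffunE; under eq_bigr do rewrite ffunE -mulrA.
by rewrite (sum_pred1_mul _ (y := 0)) // subr0 rmorphM.
Qed.

Lemma counit_red_ideal (I : {ffun A -> R} -> Prop) : hopf_ideal I ->
  forall f, red_ideal pi I f -> counit f = 0.
Proof.
by move=> [_ _ counitI _] _ [f [If ->]]; rewrite counit_red counitI ?rmorph0.
Qed.

Lemma comult_red_ideal (I : {ffun A -> R} -> Prop) : hopf_ideal I ->
  forall f, red_ideal pi I f -> in_tensor_ideal (red_ideal pi I) (comult f).
Proof.
move=> [_ comultI _ _] _ [f [If ->]].
have [h1 [h2 [e I1 I2]]] := red_tensor_ideal (comultI f If).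
exists h1, h2; split => // a b; rewrite -e /comult ffunE.
by case: (a == b); rewrite ?rmorph0.
Qed.

End Reduction.

Section LocalReduction.
Variables (R : comUnitRingType) (k : fieldType) (pi : {rmorphism R -> k}).
Variable A : finZmodType.
Hypothesis pi_unit : forall x : R, pi x != 0 -> x \is a GRing.unit.

Lemma red_natr_unit (m : nat) (u : galg R A) :
  (m%:R : R) \is a GRing.unit -> red pi u = m%:R :> galg k A ->
  exists w, u * w = 1.
Proof.
move=> m_unit red_u.
pose M : 'M[R]_#|A| := \matrix_(i, j) u (enum_val i - enum_val j).
have M_unit : M \in unitmx.
  rewrite unitmxE; apply: pi_unit; rewrite -det_map_mx.
  have -> : map_mx pi M = (m%:R : k)%:M.
    apply/matrixP => i j; rewrite !mxE.
    have := congr1 (fun f : galg k A => f (enum_val i - enum_val j)) red_u.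
    rewrite /= ffunE galg_natE subr_eq0 (inj_eq enum_val_inj) => ->.
    by case: (i == j); rewrite ?mul0rn ?mulr0n.
  rewrite det_scalar expf_neq0 // -(rmorph_nat pi) -unitfE.
  exact: rmorph_unit.
exists [ffun b => invmx M (enum_rank b) (enum_rank (0 : A))].
apply/ffunP => c; rewrite galg_mulE.
have := congr1 (fun X : 'M_#|A| => X (enum_rank c) (enum_rank (0 : A)))
  (mulmxV M_unit).
rewrite /= !mxE (inj_eq enum_rank_inj) galg1 ffunE => <-.
rewrite (reindex enum_rank) /=; last first.
  by apply: onW_bij; exact: (Bijective enum_rankK enum_valK).
rewrite (reindex_inj (subrI c)) /=; apply: eq_bigr => b _.
by rewrite !mxE ffunE subKr !enum_rankK.
Qed.

Lemma unity_root_lift (I : {ffun A -> R} -> Prop) n (q : galg R A) :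
  is_ideal I -> (n%:R : R) \is a GRing.unit ->
  I (q ^+ n - 1) -> red_ideal pi I (red pi (q - 1)) -> I (q - 1).
Proof.
move=> idealI n_unit Iqn [f [If red_q]].
pose x := q - 1 - f.
have red_x : red pi x = 0 by rewrite /x rmorphB /= red_q subrr.
have I_geom : I (x * \sum_(i < n) (1 + x) ^+ i).
  rewrite -[x in x * _](addrK 1) [x + 1]addrC -subrX1.
  have -> : 1 + x = q - f by rewrite /x addrC addrAC subrK.
  rewrite -(subrK (q ^+ n) ((q - f) ^+ n)) -addrA.
  apply: (idealD idealI) => //; apply: (idealXB idealI).
  by rewrite addrC addKr; apply: (idealN idealI).
have [w sum_w] : exists w, (\sum_(i < n) (1 + x) ^+ i) * w = 1.
  apply: (red_natr_unit n_unit); rewrite rmorph_sum.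
  under eq_bigr do rewrite rmorphXn rmorphD rmorph1 /= red_x addr0 expr1n.
  by rewrite sumr_const card_ord.
have Ix : I x by rewrite -[x]mulr1 -sum_w mulrA; apply: (idealMr idealI).
by rewrite -[q - 1](subrK f); apply: (idealD idealI).
Qed.

Lemma grouplike_red_inj (I : {ffun A -> R} -> Prop) (f g : galg R A) :
  hopf_ideal I -> (#|A|%:R : R) \is a GRing.unit ->
  grouplike I f -> grouplike I g ->
  red_ideal pi I (red pi f - red pi g) -> I (f - g).
Proof.
move=> hopfI n_unit gl_f gl_g [h [Ih red_h]].
have idealI : is_ideal I by case: hopfI.
set n := #|A|.
have Ifn := grouplike_expr_card hopfI gl_f.
have Ign := grouplike_expr_card hopfI gl_g.
have gn : g * g ^+ n.-1 = g ^+ n.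
  by rewrite -exprS prednK //; apply/card_gt0P; exists 0.
pose q := f * g ^+ n.-1.
have Iq : I (q - 1).
  apply: (unity_root_lift idealI n_unit).
    have -> : q ^+ n - 1 =
        (f ^+ n - 1) * (g ^+ n) ^+ n.-1 + ((g ^+ n) ^+ n.-1 - 1 ^+ n.-1).
      by rewrite expr1n addrA mulrBl mul1r subrK exprMn -!exprM mulnC.
    by apply: (idealD idealI); [apply: (idealMr idealI) | apply: (idealXB idealI)].
  exists ((h : galg R A) * g ^+ n.-1 + (g ^+ n - 1)); split.
    by apply: (idealD idealI) => //; apply: (idealMr idealI).
  have -> : (h : galg R A) * g ^+ n.-1 + (g ^+ n - 1) =
      ((h : galg R A) + g) * g ^+ n.-1 - 1.
    by rewrite -gn mulrDl addrA.
  by rewrite /q !rmorphB !rmorphM rmorphD /= -red_h subrK.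
have -> : f - g = (q - 1) * g - f * (g ^+ n - 1).
  rewrite /q mulrBl mul1r -mulrA [_ * g]mulrC gn mulrBr mulr1 opprB.
  by rewrite [RHS]addrC addrA subrK.
by apply: (idealB idealI); [apply: (idealMr idealI) | apply: (idealMl idealI)].
Qed.

End LocalReduction.

Theorem proposition3p7 (R : comUnitRingType) (k : fieldType)
  (pi : {rmorphism R -> k}) (A : finZmodType) (I : {ffun A -> R} -> Prop) :
  local_ring R ->
  (forall y : k, exists x : R, pi x = y) ->
  (forall x : R, pi x = 0 <-> x \notin GRing.unit) ->
  hopf_ideal I ->
  (#|A|%:R : R) \is a GRing.unit ->
  [/\ (forall f, grouplike I f -> grouplike (red_ideal pi I) (red pi f)),
      (forall f g, grouplike I f -> grouplike I g ->
         red_ideal pi I (red pi f - red pi g) -> I (f - g)) &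
      (forall u, grouplike (red_ideal pi I) u ->
         exists f, grouplike I f /\ red_ideal pi I (red pi f - u))].
Proof.
(* Locality of R is already encoded in the hypothesis on the units. *)
move=> _ pi_surj pi_unit hopfI n_unit.
have idealI : is_ideal I by case: hopfI.
have pi_neq0_unit x : pi x != 0 -> x \is a GRing.unit.
  by apply: contraNT => /pi_unit ->.
split=> [f | f g | u gl_u]; first exact: grouplike_red.
  exact: (grouplike_red_inj pi_neq0_unit).
have subJ := red_ideal_subspace idealI pi_surj.
have [c Jc] := grouplike_mod_subspace subJ (counit_red_ideal hopfI)
  (comult_red_ideal hopfI) gl_u.
exists (gelt R c); split; first exact: grouplike_gelt.
by rewrite red_gelt -opprB; apply: subspaceN.
Qed.
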